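(* Let $R$ be a ring. The following conditions are equivalent for a complex $F$ of left $R$-modules. (1) $F$ is exact. (2) Every morphism $X\to F$ with $X$ a bounded complex of projective modules factors through a projective complex. (3) Every morphism $X\to F$ with $X$ a bounded below complex of projective modules factors through a projective complex. (4) Every morphism $X\to F$ with $X$ a DG-projective complex factors through a projective complex.
   Context: Complexes are homologically indexed; a complex $X$ is bounded below if there is $b$ with $X_n=0$ for all $n\le b$, and bounded if additionally $X_n=0$ for all sufficiently large $n$. For complexes $X,Y$, $\mathrm{Hom}^\bullet(X,Y)$ is the complex with $\mathrm{Hom}^\bullet(X,Y)_n=\prod_i\mathrm{Hom}_R(X_i,Y_{i+n})$ and differential $\psi\mapsto(d^Y_{i+n}\psi_i-(-1)^n\psi_{i-1}d^X_i)_i$. A complex $X$ is DG-projective if every $X_n$ is projective and $\mathrm{Hom}^\bullet(X,G)$ is exact for every exact complex $G$. *)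

From HB Require Import structures.
From mathcomp Require Import all_boot all_order all_algebra.
Unset Printing Implicit Defensive.
Import Order.TTheory GRing.Theory Num.Theory.
Local Open Scope ring_scope.

(* Complexes are homologically indexed by [int].
   To avoid dependent-type casts between X (i-1+1) and X i, the differential
   is given as a family d i j : X i -> X j that vanishes unless j = i - 1. *)

Record complex (R : pzRingType) := Complex {
  cobj :> int -> lmodType R;
  cd : forall i j : int, {linear cobj i -> cobj j};
  cd_supp : forall (i j : int) (x : cobj i), j != i - 1 -> cd i j x = 0;
  cd_cd : forall (i j k : int) (x : cobj i), cd j k (cd i j x) = 0 }.
Arguments cobj {R} c i.
Arguments cd {R} c i j.

Section Defs.
Variable R : pzRingType.

Record chain_map (X Y : complex R) := ChainMap {
  cmap :> forall i : int, {linear X i -> Y i};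
  cmap_comm : forall (i j : int) (x : X i),
      cmap j (cd X i j x) = cd Y i j (cmap i x) }.
Arguments cmap {X Y} c i.

Definition exact_complex (X : complex R) : Prop :=
  forall (i : int) (x : X i), cd X i (i - 1) x = 0 ->
    exists y : X (i + 1), cd X (i + 1) i y = x.

Definition trivial_module (M : lmodType R) : Prop := forall x : M, x = 0.

Definition projective_module (P : lmodType R) : Prop :=
  forall (M N : lmodType R) (g : {linear M -> N}), (forall y : N, exists x : M, g x = y) ->
  forall f : {linear P -> N}, exists h : {linear P -> M},
    forall x : P, g (h x) = f x.

(* projective complex: projective object of the category of complexes,
   i.e. lifting property along epimorphisms (= degreewise surjective maps) *)
Definition projective_complex (P : complex R) : Prop :=
  forall (M N : complex R) (g : chain_map M N),
    (forall (i : int) (y : N i), exists x : M i, g i x = y) ->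
  forall f : chain_map P N, exists h : chain_map P M,
    forall (i : int) (x : P i), g i (h i x) = f i x.

Definition bounded_below (X : complex R) : Prop :=
  exists b : int, forall n : int, n <= b -> trivial_module (X n).

Definition bounded (X : complex R) : Prop :=
  bounded_below X /\ exists t : int, forall n : int, t <= n -> trivial_module (X n).

Definition degreewise_projective (X : complex R) : Prop :=
  forall n : int, projective_module (X n).

(* Elements of Hom^.(X,Y)_n = prod_i Hom_R(X_i, Y_{i+n}), represented as a
   family psi i j : X i -> Y j vanishing unless j = i + n. *)
Definition homogeneous {X Y : complex R} (n : int)
    (psi : forall i j : int, {linear X i -> Y j}) : Prop :=
  forall (i j : int) (x : X i), j != i + n -> psi i j x = 0.

Definition hom_diff {X Y : complex R} (n : int)
    (psi : forall i j : int, {linear X i -> Y j}) (i k : int) (x : X i) : Y k :=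
  cd Y (i + n) k (psi i (i + n) x)
  - ((-1) ^+ `|n|%N) *: psi (i - 1) k (cd X i (i - 1) x).

Definition hom_complex_exact (X Y : complex R) : Prop :=
  forall (n : int) (psi : forall i j : int, {linear X i -> Y j}),
    homogeneous n psi ->
    (forall (i k : int) (x : X i), hom_diff n psi i k x = 0) ->
    exists phi : forall i j : int, {linear X i -> Y j},
      homogeneous (n + 1) phi /\
      forall (i k : int) (x : X i), hom_diff (n + 1) phi i k x = psi i k x.

Definition DG_projective (X : complex R) : Prop :=
  degreewise_projective X /\
  forall G : complex R, exact_complex G -> hom_complex_exact X G.

Definition factors_through_projective {X F : complex R} (f : chain_map X F) : Prop :=
  exists (P : complex R) (u : chain_map X P) (v : chain_map P F),
    projective_complex P /\ forall (i : int) (x : X i), v i (u i x) = f i x.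

End Defs.
Arguments cmap {R X Y} c i.
Arguments chain_map {R} X Y.
Arguments exact_complex {R} X.
Arguments trivial_module {R} M.
Arguments projective_module {R} P.
Arguments projective_complex {R} P.
Arguments bounded_below {R} X.
Arguments bounded {R} X.
Arguments degreewise_projective {R} X.
Arguments homogeneous {R X Y} n psi.
Arguments hom_diff {R X Y} n psi i k x.
Arguments hom_complex_exact {R} X Y.
Arguments DG_projective {R} X.
Arguments factors_through_projective {R X F} f.

(* A chain map out of a degreewise projective complex X that is null-homotopic
   factors through the mapping cone of the identity of X, which is a projective
   complex.  If F is exact and X is DG-projective, a chain map X -> F is a
   0-cycle of Hom(X, F), hence a boundary, i.e. null-homotopic.  A bounded below
   degreewise projective complex is DG-projective: a primitive of a cycle of
   Hom(X, G) is built degree by degree from the bottom, lifting into the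
   boundaries of the exact complex G by projectivity of each X_i.  Conversely, a
   cycle x of F in degree i is the image of the generator under a chain map from
   the sphere R[i], which is bounded and degreewise projective.  If this map
   factors through a projective complex P then x is a boundary, since P is exact:
   the identity of P lifts through the contractible complex P_n + P_(n+1)
   mapping onto P. *)

From HB Require Import structures.
From mathcomp Require Import all_boot all_order all_algebra zify.
From Stdlib Require Import ClassicalEpsilon.
Import Order.TTheory GRing.Theory.
Local Open Scope ring_scope.

Section LinearMaps.
Variable R : pzRingType.

Definition mkLinear (U V : lmodType R) (f : U -> V) (lf : linear f) : {linear U -> V} :=
  HB.pack f (GRing.isLinear.Build R U V *:%R f lf).
Arguments mkLinear {U V f}.

Section Pullback.
Variables (U V W : lmodType R) (g : {linear U -> W}) (t : {linear V -> W}).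

Definition pullback_pred := [pred q : U * V | g q.1 == t q.2].

Lemma pullback_submod_closed : submod_closed pullback_pred.
Proof.
split; first by rewrite inE /= !linear0.
move=> a [u1 v1] [u2 v2]; rewrite !inE /= => /eqP e1 /eqP e2.
by rewrite !linearP e1 e2.
Qed.

HB.instance Definition _ :=
  GRing.isSubmodClosed.Build R (U * V)%type pullback_pred pullback_submod_closed.
Record pullback := Pullback { pullback_val :> U * V; _ : pullback_val \in pullback_pred }.
HB.instance Definition _ := [isSub for pullback_val].
HB.instance Definition _ := [Choice of pullback by <:].
HB.instance Definition _ := [SubChoice_isSubLmodule of pullback by <:].

Lemma pullback_valP (q : pullback) : g q.1 = t q.2.
Proof. by apply/eqP; exact: valP q. Qed.

End Pullback.
Arguments pullback_pred {U V W}.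
Arguments pullback {U V W}.
Arguments Pullback {U V W g t}.

(* Lift t through the projection of the pullback of g along t, which is onto. *)
Lemma projective_lift_in_image (P M N : lmodType R)
    (g : {linear M -> N}) (t : {linear P -> N}) :
  projective_module P -> (forall x, exists m, g m = t x) ->
  exists h : {linear P -> M}, forall x, g (h x) = t x.
Proof.
move=> projP g_hits_t.
have snd_lin : linear (fun q : pullback g t => q.2) by [].
have fst_lin : linear (fun q : pullback g t => q.1) by [].
have snd_onto (x : P) : exists q : pullback g t, mkLinear snd_lin q = x.
  have [m gm] := g_hits_t x.
  have mx : (m, x) \in pullback_pred g t by rewrite inE /= gm.
  by exists (Pullback _ mx).
have [k kP] := projP _ _ _ snd_onto idfun.
exists (mkLinear fst_lin \o k)%FUN => x /=.
by rewrite pullback_valP; congr (t _); exact: kP.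
Qed.

End LinearMaps.
Arguments mkLinear {R U V f}.
Arguments projective_lift_in_image {R P M N}.

(* [X (n - 1 + 1)] and [X n] are not convertible; [delta_id p q] transports
   along [p = q] and is the zero map when [p != q]. *)
Section DeltaId.
Variables (R : pzRingType) (M : int -> lmodType R).

Definition delta_id (p q : int) : {linear M p -> M q} :=
  match p =P q with
  | ReflectT e => eq_rect p (fun k => {linear M p -> M k}) idfun q e
  | ReflectF _ => \0
  end.

Lemma delta_id_id p x : delta_id p p x = x.
Proof. by rewrite /delta_id; case: eqP => // e; rewrite (eq_irrelevance e erefl). Qed.

Lemma delta_id_neq p q x : p != q -> delta_id p q x = 0.
Proof. by rewrite /delta_id; case: eqP. Qed.

Lemma comp_delta_id (N : lmodType R) (g : forall p, {linear M p -> N}) p q x :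
  p = q -> g q (delta_id p q x) = g p x.
Proof. by move=> <-; rewrite delta_id_id. Qed.

End DeltaId.
Arguments delta_id {R M}.
Arguments comp_delta_id {R M N}.

(* The mapping cone of the identity of the graded module [M]. *)
Section Disk.
Variables (R : pzRingType) (M : int -> lmodType R).

Definition disk_obj (n : int) : lmodType R := (M (n - 1) * M n)%type.

Lemma disk_d_linear i j :
  linear (fun ab : disk_obj i => (0, delta_id (i - 1) j ab.1) : disk_obj j).
Proof.
move=> a [x1 y1] [x2 y2].
by apply: injective_projections => /=; [rewrite scaler0 addr0 | exact: linearP].
Qed.

Definition disk_d i j : {linear disk_obj i -> disk_obj j} := mkLinear (disk_d_linear i j).

Lemma disk_d_supp i j x : j != i - 1 -> disk_d i j x = 0.
Proof. by move=> ne; rewrite /= delta_id_neq // eq_sym. Qed.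

Lemma disk_dd i j k x : disk_d j k (disk_d i j x) = 0.
Proof. by rewrite /= linear0. Qed.

Definition disk : complex R := @Complex R _ _ disk_d_supp disk_dd.

Lemma disk_projective : (forall n, projective_module (M n)) -> projective_complex disk.
Proof.
move=> projM A B g g_onto f.
have in_fst_lin n : linear (fun a : M (n - 1) => f n ((a, 0) : disk n)).
  move=> r a a'; rewrite -linearP; congr (f n _).
  by apply: injective_projections => /=; rewrite ?scaler0 ?addr0.
have lift n : exists l : {linear M (n - 1) -> A n},
    forall a, g n (l a) = f n ((a, 0) : disk n).
  exact: projM _ _ _ _ (g_onto n) (mkLinear (in_fst_lin n)).
pose l n := proj1_sig (constructive_indefinite_description _ (lift n)).
have lP n a : g n (l n a) = f n ((a, 0) : disk n).
  exact: (proj2_sig (constructive_indefinite_description _ (lift n))).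
have h_lin n : linear (fun ab : disk n =>
    l n ab.1 + cd A (n + 1) n (l (n + 1) (delta_id n (n + 1 - 1) ab.2))).
  by move=> r [x1 y1] [x2 y2] /=; rewrite !linearP scalerDr addrACA.
have h_comm i j (x : disk i) :
    mkLinear (h_lin j) (cd disk i j x) = cd A i j (mkLinear (h_lin i) x).
  case: x => a b /=; rewrite linearD cd_cd addr0 linear0 add0r.
  have [->|ne] := eqVneq j (i - 1); first by rewrite delta_id_id subrK delta_id_id.
  by rewrite [delta_id (i - 1) j a]delta_id_neq 1?eq_sym // !linear0 cd_supp.
exists (@ChainMap R _ _ (fun n => mkLinear (h_lin n)) h_comm) => n [a b] /=.
rewrite linearD lP (@cmap_comm R _ _ g) lP -(@cmap_comm R _ _ f) /= addrK !delta_id_id.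
by rewrite -linearD; congr (f n (_, _)); rewrite ?addr0 ?add0r.
Qed.

End Disk.
Arguments disk {R}.

Section ProjectiveExact.
Variables (R : pzRingType) (P : complex R).

Let disk_up := disk (fun n => P (n + 1)).

Lemma disk_up_proj_linear n :
  linear (fun ab : disk_up n => delta_id (n - 1 + 1) n ab.1 + cd P (n + 1) n ab.2).
Proof. by move=> r [x1 y1] [x2 y2] /=; rewrite !linearP scalerDr addrACA. Qed.

Lemma disk_up_proj_comm i j (x : disk_up i) :
  mkLinear (disk_up_proj_linear j) (cd disk_up i j x) =
  cd P i j (mkLinear (disk_up_proj_linear i) x).
Proof.
case: x => a b /=; rewrite linear0 add0r linearD cd_cd addr0.
have [->|ne] := eqVneq j (i - 1).
  by rewrite delta_id_id (comp_delta_id (fun p => cd P p (i - 1))) // subrK.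
by rewrite [RHS]cd_supp // (@delta_id_neq _ (fun n => P (n + 1))) ?linear0 // eq_sym.
Qed.

Definition disk_up_proj : chain_map disk_up P :=
  @ChainMap R _ _ (fun n => mkLinear (disk_up_proj_linear n)) disk_up_proj_comm.

Lemma projective_complex_exact : projective_complex P -> exact_complex P.
Proof.
move=> projP i z dz0.
have onto n (y : P n) : exists x : disk_up n, disk_up_proj n x = y.
  exists (delta_id n (n - 1 + 1) y, 0).
  by rewrite /= linear0 addr0 (comp_delta_id (fun p => delta_id p n)) ?subrK // delta_id_id.
pose id_P : chain_map P P := @ChainMap R P P (fun n => idfun) (fun _ _ _ => erefl).
have [s sP] := projP _ _ disk_up_proj onto id_P.
have := @cmap_comm R _ _ s i (i - 1) z; rewrite dz0 linear0.
move: (sP i z) => /=; case: (s i z) => a b /= <- /(congr1 snd) /=.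
by rewrite delta_id_id => <-; rewrite linear0 add0r; exists b.
Qed.

End ProjectiveExact.
Arguments projective_complex_exact {R P}.

Section NullHomotopic.
Variables (R : pzRingType) (X F : complex R).

Lemma to_disk_linear n : linear (fun x : X n => (cd X n (n - 1) x, x) : disk X n).
Proof. by move=> r x y; rewrite linearP. Qed.

Lemma to_disk_comm i j (x : X i) :
  mkLinear (to_disk_linear j) (cd X i j x) = cd (disk X) i j (mkLinear (to_disk_linear i) x).
Proof.
rewrite /= cd_cd; congr (_, _).
have [->|ne] := eqVneq j (i - 1); first by rewrite delta_id_id.
by rewrite cd_supp // delta_id_neq // eq_sym.
Qed.

Definition to_disk : chain_map X (disk X) :=
  @ChainMap R _ _ (fun n => mkLinear (to_disk_linear n)) to_disk_comm.

Variable s : forall i j : int, {linear X i -> F j}.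

Lemma from_disk_linear n : linear (fun ab : disk X n =>
  s (n - 1) n ab.1 + cd F (n + 1) n (s n (n + 1) ab.2)).
Proof. by move=> r [x1 y1] [x2 y2] /=; rewrite !linearP scalerDr addrACA. Qed.

Lemma from_disk_comm i j (x : disk X i) :
  mkLinear (from_disk_linear j) (cd (disk X) i j x) =
  cd F i j (mkLinear (from_disk_linear i) x).
Proof.
case: x => a b /=; rewrite linear0 add0r linearD cd_cd addr0.
have [->|ne] := eqVneq j (i - 1); first by rewrite delta_id_id subrK.
by rewrite delta_id_neq 1?eq_sym // !linear0 cd_supp.
Qed.

Definition from_disk : chain_map (disk X) F :=
  @ChainMap R _ _ (fun n => mkLinear (from_disk_linear n)) from_disk_comm.

Lemma from_disk_to_disk i (x : X i) : from_disk i (to_disk i x) = hom_diff 1 s i i x.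
Proof. by rewrite /= /hom_diff expr1 scaleN1r opprK addrC. Qed.

End NullHomotopic.
Arguments to_disk {R}.
Arguments from_disk {R X F}.

Lemma null_homotopic_factors_through_projective (R : pzRingType) (X F : complex R)
    (f : chain_map X F) (s : forall i j : int, {linear X i -> F j}) :
  degreewise_projective X -> (forall i x, hom_diff 1 s i i x = f i x) ->
  factors_through_projective f.
Proof.
move=> projX sf; exists (disk X), (to_disk X), (from_disk s).
split; first exact: disk_projective.
by move=> i x; rewrite from_disk_to_disk sf.
Qed.

Lemma factors_through_projective_of_hom_exact (R : pzRingType) (X F : complex R)
    (f : chain_map X F) :
  degreewise_projective X -> hom_complex_exact X F -> factors_through_projective f.
Proof.
move=> projX exXF.
have f_lin i j : linear (fun x : X i => delta_id i j (f i x)).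
  by move=> r x y; rewrite !linearP.
pose f0 i j := mkLinear (f_lin i j).
have f0_hom : homogeneous 0 f0.
  by move=> i j x; rewrite addr0 => ne; rewrite /= delta_id_neq // eq_sym.
have f0_cycle i k x : hom_diff 0 f0 i k x = 0.
  rewrite /hom_diff /= addr0 delta_id_id expr0 scale1r -(@cmap_comm R _ _ f).
  have [->|ne] := eqVneq k (i - 1); first by rewrite delta_id_id subrr.
  by rewrite cd_supp // linear0 delta_id_neq ?subrr // eq_sym.
have [s [_ sf0]] := exXF 0 f0 f0_hom f0_cycle.
apply: (@null_homotopic_factors_through_projective _ _ _ _ s) => // i x.
by rewrite sf0 /= delta_id_id.
Qed.

Lemma sign_succ (R : pzRingType) (n : int) :
  (-1) ^+ `|(n + 1)%R|%N = - ((-1) ^+ `|n|%N) :> R.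
Proof.
case: n => [k|k]; first by rewrite /= -addn1 exprD expr1 mulrN1.
rewrite NegzE; case: k => [|k]; first by rewrite /= expr0 expr1 opprK.
have -> : `|(- (k.+2)%:Z + 1)%R|%N = k.+1 by lia.
have -> : `|(- (k.+2)%:Z)%R|%N = k.+2 by lia.
by rewrite [in RHS]exprS mulN1r opprK.
Qed.

Lemma hom_diff_ext (R : pzRingType) (X G : complex R) (n : int)
    (p q : forall i j : int, {linear X i -> G j}) a l x :
  (forall j y, p a j y = q a j y) -> (forall j y, p (a - 1) j y = q (a - 1) j y) ->
  hom_diff n p a l x = hom_diff n q a l x.
Proof. by move=> pqa pqa1; rewrite /hom_diff pqa pqa1. Qed.

Section BoundedBelow.
Variables (R : pzRingType) (X G : complex R) (b : int).
Hypothesis X_trivial_below : forall m, m <= b -> trivial_module (X m).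
Hypothesis projX : degreewise_projective X.
Hypothesis exG : exact_complex G.
Variables (n : int) (psi : forall i j : int, {linear X i -> G j}).
Hypothesis psi_hom : homogeneous n psi.
Hypothesis psi_cycle : forall i k x, hom_diff n psi i k x = 0.

Local Notation hom_family := (forall i j : int, {linear X i -> G j}).

Definition partial_primitive (c : int) (phi : hom_family) : Prop :=
  [/\ homogeneous (n + 1) phi, forall a j x, c < a -> phi a j x = 0 &
      forall a l x, a <= c -> hom_diff (n + 1) phi a l x = psi a l x].

Lemma partial_primitive_bottom : partial_primitive b (fun _ _ => \0).
Proof.
split=> // a l x le_ab.
by rewrite (X_trivial_below a le_ab x) /hom_diff /= !linear0 scaler0 subr0.
Qed.

Lemma primitive_defect_cycle i phi (x : X i) : partial_primitive (i - 1) phi ->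
  cd G (i + n) (i + n - 1) (psi i (i + n) x +
    (-1) ^+ `|(n + 1)%R|%N *: phi (i - 1) (i + n) (cd X i (i - 1) x)) = 0.
Proof.
case=> _ _ dphi; rewrite linearD linearZ_LR.
move: (psi_cycle i (i + n - 1) x); rewrite /hom_diff => /eqP; rewrite subr_eq0 => /eqP ->.
move: (dphi (i - 1) (i + n - 1) (cd X i (i - 1) x) (lexx _)).
rewrite /hom_diff cd_cd linear0 scaler0 subr0 (_ : i - 1 + (n + 1) = i + n); last by lia.
by move->; rewrite sign_succ scaleNr subrr.
Qed.

Lemma partial_primitive_extend c phi : partial_primitive c phi ->
  exists phi', partial_primitive (c + 1) phi' /\
    forall a j x, a <= c -> phi' a j x = phi a j x.
Proof.
move=> pp; move Ei : (c + 1) => i.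
have ec : c = i - 1 by rewrite -Ei addrK.
subst c; have [phi_hom phi_above dphi] := pp.
pose sg : R := (-1) ^+ `|(n + 1)%R|%N.
have t_lin : linear (fun x : X i =>
    psi i (i + n) x + sg *: phi (i - 1) (i + n) (cd X i (i - 1) x)).
  by move=> r x y; rewrite !linearP !scalerDr !scalerA (commrX _ (commrN1 r)) addrACA.
have [l lP] := projective_lift_in_image (cd G (i + n + 1) (i + n)) (mkLinear t_lin)
  (projX i) (fun x => exG _ _ (primitive_defect_cycle _ _ x pp)).
have phi'_lin a j : linear (fun x : X a =>
    phi a j x + delta_id (i + n + 1) j (l (delta_id a i x))).
  by move=> r x y; rewrite !linearP scalerDr addrACA.
pose phi' a j := mkLinear (phi'_lin a j).
have phi'_below a j x : a <= i - 1 -> phi' a j x = phi a j x.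
  by move=> le_a; rewrite /= [delta_id a i x]delta_id_neq ?linear0 ?addr0 //; apply/eqP; lia.
have e_deg : i + (n + 1) = i + n + 1 by rewrite addrA.
exists phi'; split=> //; split.
- move=> a j x ne /=; rewrite phi_hom // add0r.
  have [ea|ne_a] := eqVneq a i; last by rewrite [delta_id a i x]delta_id_neq ?linear0.
  by subst a; rewrite delta_id_id delta_id_neq // -e_deg eq_sym.
- move=> a j x lt_a /=; rewrite phi_above; last by lia.
  by rewrite add0r [delta_id a i x]delta_id_neq ?linear0 //; apply/eqP; lia.
move=> a l' x le_a; have [ea|ne_a] := eqVneq a i; last first.
  have le_a1 : a <= i - 1 by move/eqP: ne_a; lia.
  rewrite (@hom_diff_ext _ _ _ _ _ phi) => [|j y|j y]; first exact: dphi.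
    exact: phi'_below.
  by apply: phi'_below; lia.
subst a; rewrite /hom_diff /= phi_above; last by lia.
rewrite [delta_id (i - 1) i _]delta_id_neq; last by apply/eqP; lia.
rewrite !linear0 addr0 add0r e_deg delta_id_id.
have [->|ne_l] := eqVneq l' (i + n); first by rewrite lP /= delta_id_id addrK.
rewrite cd_supp; last by rewrite addrK.
by rewrite psi_hom // phi_hom ?scaler0 ?subr0 // (_ : i - 1 + (n + 1) = i + n) //; lia.
Qed.

Lemma partial_primitive_extend_total c phi : exists phi', partial_primitive c phi ->
  partial_primitive (c + 1) phi' /\ forall a j x, a <= c -> phi' a j x = phi a j x.
Proof.
have [/partial_primitive_extend [phi' ?]|not_pp] := classic (partial_primitive c phi).
  by exists phi'.
by exists phi => /not_pp.
Qed.

Definition extend_primitive c phi : hom_family :=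
  proj1_sig (constructive_indefinite_description _ (partial_primitive_extend_total c phi)).

Lemma extend_primitiveP c phi : partial_primitive c phi ->
  partial_primitive (c + 1) (extend_primitive c phi) /\
  forall a j x, a <= c -> extend_primitive c phi a j x = phi a j x.
Proof.
exact: proj2_sig (constructive_indefinite_description _ (partial_primitive_extend_total c phi)).
Qed.

Fixpoint primitive_approx (k : nat) : hom_family :=
  if k is k'.+1 then extend_primitive (b + k'%:Z) (primitive_approx k') else fun _ _ => \0.

Lemma partial_primitive_approx k : partial_primitive (b + k%:Z) (primitive_approx k).
Proof.
elim: k => [|k IH]; first by rewrite addr0; exact: partial_primitive_bottom.
by rewrite (_ : b + k.+1%:Z = b + k%:Z + 1); [case: (extend_primitiveP _ _ IH) | lia].
Qed.

Lemma primitive_approx_stable k k' a j x : (k <= k')%N -> a <= b + k%:Z ->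
  primitive_approx k' a j x = primitive_approx k a j x.
Proof.
move=> le_kk' le_a; elim: k' le_kk' => [|k' IH] le_kk'; first by have -> : k = 0%N by lia.
have [->|ne] := eqVneq k k'.+1; first by [].
have le_kk : (k <= k')%N by lia.
by rewrite /= (extend_primitiveP _ _ (partial_primitive_approx k')).2 ?IH //; lia.
Qed.

Lemma primitive_approx_agree k1 k2 a j x : a <= b + k1%:Z -> a <= b + k2%:Z ->
  primitive_approx k1 a j x = primitive_approx k2 a j x.
Proof.
move=> le1 le2; have [le|le] := leqP k1 k2.
  by rewrite (@primitive_approx_stable k1 k2).
by rewrite (@primitive_approx_stable k2 k1) // ltnW.
Qed.

Lemma hom_cycle_is_boundary : exists phi : hom_family, homogeneous (n + 1) phi /\
  forall i k x, hom_diff (n + 1) phi i k x = psi i k x.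
Proof.
pose depth (a : int) := `|(a - b)%R|%N.
exists (fun a j => primitive_approx (depth a) a j); split.
  by move=> a j x; case: (partial_primitive_approx (depth a)) => + _ _; apply.
move=> a l x; rewrite (@hom_diff_ext _ _ _ _ _ (primitive_approx (depth a))) //.
  by case: (partial_primitive_approx (depth a)) => _ _; apply; rewrite /depth; lia.
by move=> j y; apply: primitive_approx_agree; rewrite /depth; lia.
Qed.

End BoundedBelow.

Lemma hom_complex_exact_of_bounded_below (R : pzRingType) (X G : complex R) :
  bounded_below X -> degreewise_projective X -> exact_complex G -> hom_complex_exact X G.
Proof. by move=> [b Xb] projX exG n; exact: hom_cycle_is_boundary Xb projX exG n. Qed.

Lemma DG_projective_of_bounded_below (R : pzRingType) (X : complex R) :
  bounded_below X -> degreewise_projective X -> DG_projective X.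
Proof.
by move=> bX projX; split=> // G; exact: hom_complex_exact_of_bounded_below.
Qed.

Lemma factors_through_projective_of_DG_projective (R : pzRingType) (X F : complex R)
    (f : chain_map X F) :
  exact_complex F -> DG_projective X -> factors_through_projective f.
Proof.
by move=> exF [projX homX]; apply: factors_through_projective_of_hom_exact => //; exact: homX.
Qed.

Section RowCombination.
Variables (R : pzRingType) (U : lmodType R) (m : nat).

Lemma row_comb_linear (v : 'I_m -> U) : linear (fun A : 'rV[R]_m => \sum_j A 0 j *: v j).
Proof.
move=> r A B; rewrite scaler_sumr -big_split /=; apply: eq_bigr => k _.
by rewrite !mxE scalerDl scalerA.
Qed.

Definition row_comb (v : 'I_m -> U) : {linear 'rV[R]_m -> U} := mkLinear (row_comb_linear v).

End RowCombination.
Arguments row_comb {R U m}.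

Lemma rV_projective (R : pzRingType) (m : nat) : projective_module ('rV[R]_m : lmodType R).
Proof.
move=> M N g g_onto f.
have [v vP] := fin_all_exists (fun j : 'I_m => g_onto (f (delta_mx 0 j))).
exists (row_comb v) => A /=.
rewrite linear_sum {2}(row_sum_delta A) linear_sum; apply: eq_bigr => k _.
by rewrite !linearZ_LR vP.
Qed.

Section Sphere.
Variables (R : pzRingType) (i0 : int).

(* [R] concentrated in degree [i0]; [m == i0] is read as the width [0] or [1]. *)
Definition sphere_obj (m : int) : lmodType R := 'rV[R]_(m == i0).

Definition sphere : complex R :=
  @Complex R sphere_obj (fun _ _ => \0) (fun _ _ _ _ => erefl) (fun _ _ _ _ => erefl).

Lemma sphere_trivial m : m != i0 -> trivial_module (sphere m).
Proof. by rewrite /= /sphere_obj; case: (m == i0) => // _ A; exact: thinmx0. Qed.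

Lemma sphere_bounded : bounded sphere.
Proof.
by split; [exists (i0 - 1) | exists (i0 + 1)] => m le_m; apply: sphere_trivial; apply/eqP; lia.
Qed.

Lemma sphere_degreewise_projective : degreewise_projective sphere.
Proof. by move=> m; exact: rV_projective. Qed.

Lemma sphere_DG_projective : DG_projective sphere.
Proof.
apply: DG_projective_of_bounded_below; last exact: sphere_degreewise_projective.
exact: sphere_bounded.1.
Qed.

Definition sphere_gen : sphere i0 := const_mx 1.

Variables (F : complex R) (x : F i0).
Hypothesis x_cycle : cd F i0 (i0 - 1) x = 0.

Lemma sphere_map_comm i j (A : sphere i) :
  row_comb (fun _ => delta_id i0 j x) (cd sphere i j A) =
  cd F i j (row_comb (fun _ => delta_id i0 i x) A).
Proof.
have dx0 : cd F i j (delta_id i0 i x) = 0.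
  have [ei|ne] := eqVneq i i0; last by rewrite delta_id_neq 1?eq_sym ?linear0.
  subst i; rewrite delta_id_id; have [->|ne] := eqVneq j (i0 - 1); first exact: x_cycle.
  exact: cd_supp.
rewrite /= linear_sum !big1 // => k _; first by rewrite linearZ_LR dx0 scaler0.
by rewrite mxE scale0r.
Qed.

Definition sphere_map : chain_map sphere F :=
  @ChainMap R sphere F (fun m => row_comb (fun _ => delta_id i0 m x)) sphere_map_comm.

Lemma sphere_map_gen : sphere_map i0 sphere_gen = x.
Proof.
rewrite /= (eq_bigr (fun _ => delta_id i0 i0 x)) => [|k _]; last by rewrite mxE scale1r.
by rewrite sumr_const card_ord eqxx delta_id_id.
Qed.

Lemma boundary_of_sphere_map_factor :
  factors_through_projective sphere_map -> exists y : F (i0 + 1), cd F (i0 + 1) i0 y = x.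
Proof.
case=> P [u [v [projP uv]]].
have du : cd P i0 (i0 - 1) (u i0 sphere_gen) = 0.
  by rewrite -(@cmap_comm R _ _ u) /= linear0.
have [w dw] := projective_complex_exact projP _ _ du.
by exists (v (i0 + 1) w); rewrite -(@cmap_comm R _ _ v) dw uv sphere_map_gen.
Qed.

End Sphere.
Arguments sphere {R}.
Arguments sphere_map {R i0 F x}.

Lemma exact_of_sphere_maps_factor (R : pzRingType) (F : complex R) :
  (forall i (x : F i) (dx : cd F i (i - 1) x = 0),
     factors_through_projective (sphere_map dx)) ->
  exact_complex F.
Proof. by move=> H i x dx; exact: boundary_of_sphere_map_factor (H i x dx). Qed.

Theorem corollary3p8 (R : pzRingType) (F : complex R) :
  (exact_complex F <->
     (forall (X : complex R) (f : chain_map X F),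
        bounded X -> degreewise_projective X -> factors_through_projective f)) /\
  (exact_complex F <->
     (forall (X : complex R) (f : chain_map X F),
        bounded_below X -> degreewise_projective X -> factors_through_projective f)) /\
  (exact_complex F <->
     (forall (X : complex R) (f : chain_map X F),
        DG_projective X -> factors_through_projective f)).
Proof.
split; [|split]; split.
- move=> exF X f [bX _] projX; apply: factors_through_projective_of_DG_projective => //.
  exact: DG_projective_of_bounded_below.
- move=> H; apply: exact_of_sphere_maps_factor => i x dx; apply: H.
    exact: sphere_bounded.
  exact: sphere_degreewise_projective.
- move=> exF X f bX projX; apply: factors_through_projective_of_DG_projective => //.
  exact: DG_projective_of_bounded_below.
- move=> H; apply: exact_of_sphere_maps_factor => i x dx; apply: H.
    exact: (sphere_bounded R i).1.
  exact: sphere_degreewise_projective.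
- by move=> exF X f; exact: factors_through_projective_of_DG_projective.
- move=> H; apply: exact_of_sphere_maps_factor => i x dx; apply: H.
  exact: sphere_DG_projective.
Qed.
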